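(* Any algorithm that estimates the maximum path cover size of an $n$-vertex graph within a constant multiplicative factor requires $\Omega(n)$ queries in the adjacency list model.
   Context: A path cover is a collection of vertex-disjoint simple paths; its size is the total number of edges, and the maximum path cover size is the maximum over all path covers. Estimating within a constant multiplicative factor $\gamma\in(0,1]$ means outputting $\tilde{\rho}$ with $\gamma\rho\le\tilde{\rho}\le\rho$. In the adjacency list model the algorithm may query the degree of a vertex and the $i$-th neighbor of a vertex in its adjacency list. *)

From Stdlib Require List.
From mathcomp Require Import all_boot all_order all_algebra.
From mathcomp Require Import boolp.
Set Implicit Arguments. Unset Strict Implicit. Unset Printing Implicit Defensive.
Import Order.TTheory GRing.Theory Num.Theory.
Local Open Scope ring_scope.

(* A graph on the vertex set 'I_n given in the adjacency list model:
   each vertex v has an ordered adjacency list [adj v]. *)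
Definition adjlist (n : nat) := 'I_n -> seq 'I_n.

Definition simple_adjlist (n : nat) (adj : adjlist n) : Prop :=
  forall v : 'I_n,
    [/\ uniq (adj v), v \notin adj v &
        forall u : 'I_n, (u \in adj v) = (v \in adj u)].

(* A simple path: a sequence of distinct vertices, consecutive ones adjacent.
   Its number of edges is (size p).-1. *)
Definition is_simple_path (n : nat) (adj : adjlist n) (p : seq 'I_n) : bool :=
  uniq p && sorted (fun u v => v \in adj u) p.

Definition is_path_cover (n : nat) (adj : adjlist n) (P : seq (seq 'I_n)) : bool :=
  all (is_simple_path adj) P && uniq (flatten P).

Definition path_cover_size (n : nat) (P : seq (seq 'I_n)) : nat :=
  sumn [seq (size p).-1 | p <- P].

Definition is_max_path_cover_size (n : nat) (adj : adjlist n) (r : nat) : Prop :=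
  (exists2 P, is_path_cover adj P & path_cover_size P = r) /\
  (forall P, is_path_cover adj P -> (path_cover_size P <= r)%N).

(* Deterministic adaptive query algorithms (decision trees) in the adjacency
   list model, outputting an estimate in R.
   - QDeg v k : query the degree of v, continue with k (degree)
   - QNbr v i k : query the i-th (0-based) neighbour of v; answer is
                  Some u, or None if i >= deg v. *)
Inductive qtree (R : Type) (n : nat) : Type :=
| Leaf of R
| QDeg of 'I_n & (nat -> qtree R n)
| QNbr of 'I_n & nat & (option 'I_n -> qtree R n).

(* Run a decision tree on a graph: (output, number of queries made). *)
Fixpoint run (R : Type) (n : nat) (adj : adjlist n) (t : qtree R n) : R * nat :=
  match t with
  | Leaf r => (r, 0%N)
  | QDeg v k => let: (o, q) := run adj (k (size (adj v))) in (o, q.+1)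
  | QNbr v i k => let: (o, q) := run adj (k (onth (adj v) i)) in (o, q.+1)
  end.

(* A randomized algorithm: a finitely supported probability distribution
   over deterministic decision trees (weight, tree). *)
Notation rand_alg R n := (seq (prod R (qtree R n))) (only parsing).

Definition is_distribution (R : numDomainType) (n : nat) (A : rand_alg R n) : Prop :=
  (forall wt : R * qtree R n, List.In wt A -> 0 <= wt.1) /\ \sum_(wt <- A) wt.1 = 1.

Definition good_estimate (R : numDomainType) (n : nat) (adj : adjlist n)
    (gamma x : R) : bool :=
  `[< forall r : nat, is_max_path_cover_size adj r ->
        gamma * r%:R <= x /\ x <= r%:R >].

Definition success_prob (R : numDomainType) (n : nat) (gamma : R)
    (A : rand_alg R n) (adj : adjlist n) : R :=
  \sum_(wt <- A) wt.1 * (good_estimate adj gamma (run adj wt.2).1)%:R.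

(** Yao-style argument on the pair of inputs "empty graph" versus "one edge
    u v". A good estimate must be [<= 0] on the empty graph and [>= gamma > 0]
    on the edge, so a decision tree that never queries u or v, behaving
    identically on both graphs, is correct on at most one of them. Succeeding
    with probability 2/3 on both thus forces the algorithm to query the pair
    {u, v} with probability at least 1/3. Summing over the n/2 disjoint pairs
    {2i, 2i+1}, the expected number of vertices queried on the empty graph is
    at least n/6, so some tree in the support makes at least n/12 queries. *)

From Stdlib Require List.
From mathcomp Require Import all_boot all_order all_algebra.
From mathcomp Require Import boolp zify lra.
Set Implicit Arguments. Unset Strict Implicit. Unset Printing Implicit Defensive.
Import Order.TTheory GRing.Theory Num.Theory.
Local Open Scope ring_scope.

Definition empty_adjlist (n : nat) : adjlist n := fun=> [::].
Arguments empty_adjlist {n}.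

Definition edge_adjlist (n : nat) (u v : 'I_n) : adjlist n :=
  fun w => if w == u then [:: v] else if w == v then [:: u] else [::].

Lemma simple_empty_adjlist n : simple_adjlist (@empty_adjlist n).
Proof. by []. Qed.

Lemma mem_edge_adjlist n (u v w x : 'I_n) : u != v ->
  (x \in edge_adjlist u v w) = (w == u) && (x == v) || (w == v) && (x == u).
Proof.
move=> neq_uv; rewrite /edge_adjlist.
have [-> | _] := eqVneq w u; first by rewrite inE (negbTE neq_uv) orbF.
by case: eqVneq; rewrite ?inE.
Qed.

Lemma simple_edge_adjlist n (u v : 'I_n) : u != v -> simple_adjlist (edge_adjlist u v).
Proof.
move=> neq_uv w; split.
- by rewrite /edge_adjlist; case: (w == u); case: (w == v).
- rewrite mem_edge_adjlist //; apply/negP => /orP [] /andP [/eqP wu /eqP wv];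
    by move: neq_uv; rewrite -wu -wv eqxx.
- by move=> x; rewrite !mem_edge_adjlist // orbC; congr orb; apply: andbC.
Qed.

Lemma path_cover_size_le n (adj : adjlist n) P :
  is_path_cover adj P -> (path_cover_size P <= n)%N.
Proof.
case/andP=> _ /card_uniqP card_P.
apply: (@leq_trans (size (flatten P))); last first.
  by rewrite -card_P -[leqRHS](card_ord n) max_card.
elim: P {card_P} => [|p P IH] //=; rewrite /path_cover_size /= size_cat.
exact: leq_add (leq_pred _) IH.
Qed.

Lemma exists_max_path_cover_size n (adj : adjlist n) :
  exists r, is_max_path_cover_size adj r.
Proof.
pose achieved k := `[< exists2 P, is_path_cover adj P & path_cover_size P = k >].
have achieved0 : exists k, achieved k by exists 0%N; apply/asboolP; exists [::].
have achieved_le k : achieved k -> (k <= n)%N.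
  by move=> /asboolP [P coverP <-]; exact: path_cover_size_le coverP.
case: (ex_maxnP achieved0 achieved_le) => r /asboolP achieved_r max_r.
by exists r; split => // P coverP; apply: max_r; apply/asboolP; exists P.
Qed.

Lemma path_cover_size_empty n P :
  is_path_cover (@empty_adjlist n) P -> path_cover_size P = 0%N.
Proof.
case/andP; rewrite /path_cover_size; elim: P => [|p P IH] //= /andP [].
case/andP=> _ sorted_p /IH {}IH; rewrite cat_uniq => /and3P [_ _ /IH ->].
by case: p sorted_p => [|x [|y q]].
Qed.

Lemma good_estimate_empty_le0 (R : numDomainType) n (gamma x : R) :
  good_estimate (@empty_adjlist n) gamma x -> x <= 0.
Proof.
move=> /asboolP good_x.
have max0 : is_max_path_cover_size (@empty_adjlist n) 0.
  by split=> [|P /path_cover_size_empty ->]; first exists [::].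
exact: (good_x 0%N max0).2.
Qed.

Lemma good_estimate_edge_gt0 (R : numDomainType) n (u v : 'I_n) (gamma x : R) :
  u != v -> 0 < gamma -> good_estimate (edge_adjlist u v) gamma x -> 0 < x.
Proof.
move=> neq_uv gamma_gt0 /asboolP good_x.
have [r max_r] := exists_max_path_cover_size (edge_adjlist u v).
have r_gt0 : (0 < r)%N.
  apply: (max_r.2 [:: [:: u; v]]).
  by rewrite /is_path_cover /is_simple_path /= mem_edge_adjlist // !eqxx !inE neq_uv.
by apply: lt_le_trans (good_x r max_r).1; rewrite mulr_gt0 ?ltr0n.
Qed.

(* The vertices queried when running [t] on the empty graph, where every degree
   query answers 0 and every neighbour query answers [None]. *)
Fixpoint queried (R : Type) n (t : qtree R n) : seq 'I_n :=
  match t with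
  | Leaf _ => [::]
  | QDeg v k => v :: queried (k 0%N)
  | QNbr v _ k => v :: queried (k None)
  end.

Lemma run_empty_queries (R : Type) n (t : qtree R n) :
  (run empty_adjlist t).2 = size (queried t).
Proof.
elim: t => [//|v k IH|v i k IH] /=.
- by move: (IH 0%N); case: run => o q /= ->.
- by rewrite onth0n; move: (IH None); case: run => o q /= ->.
Qed.

Lemma run_edge_unqueried (R : Type) n (u v : 'I_n) (t : qtree R n) :
  u \notin queried t -> v \notin queried t ->
  run (edge_adjlist u v) t = run empty_adjlist t.
Proof.
elim: t => [//|w k IH|w i k IH] /=;
  rewrite !inE !negb_or => /andP [wu unq] /andP [wv vnq];
  have -> : edge_adjlist u v w = [::]
    by rewrite /edge_adjlist eq_sym (negbTE wu) eq_sym (negbTE wv).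
- by rewrite IH.
- by rewrite onth0n IH.
Qed.

Lemma good_estimate_empty_edge_excl (R : numDomainType) n (u v : 'I_n) (gamma x : R) :
  u != v -> 0 < gamma ->
  ~~ (good_estimate (@empty_adjlist n) gamma x && good_estimate (edge_adjlist u v) gamma x).
Proof.
move=> neq_uv gamma_gt0; apply/andP => -[/good_estimate_empty_le0 x_le0].
by move/(good_estimate_edge_gt0 neq_uv gamma_gt0)/lt_le_trans/(_ x_le0); rewrite ltxx.
Qed.

Lemma ler_sum_In (R : numDomainType) (T : Type) (s : seq T) (F G : T -> R) :
  (forall x, List.In x s -> F x <= G x) -> \sum_(x <- s) F x <= \sum_(x <- s) G x.
Proof.
elim: s => [|a s IH] le_FG; first by rewrite !big_nil.
rewrite !big_cons lerD ?le_FG ?IH //=; first by left.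
by move=> x sx; apply: le_FG; right.
Qed.

Lemma weighted_sum_le (R : numDomainType) (T : Type) (s : seq T) (w f : T -> R) (a : R) :
  (forall x, List.In x s -> 0 <= w x) ->
  (forall x, List.In x s -> 0 < w x -> f x <= a) ->
  \sum_(x <- s) w x * f x <= a * \sum_(x <- s) w x.
Proof.
move=> w_ge0 f_le; rewrite mulr_sumr; apply: ler_sum_In => x sx.
have := w_ge0 x sx; rewrite le0r mulrC => /orP [/eqP -> | w_gt0].
  by rewrite !mulr0.
by rewrite ler_pM2r // f_le.
Qed.

Lemma sum_has_fiber_le_size (T : Type) (f : T -> nat) (m : nat) (s : seq T) :
  (\sum_(i < m) has (fun x => f x == i) s <= size s)%N.
Proof.
elim: s => [|x s IH] /=; first by rewrite big1.
have hit_le1 : (\sum_(i < m) (f x == i) <= 1)%N.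
  rewrite -big_mkcond sum1_card; apply/card_le1_eqP => i j /eqP fi /eqP fj.
  by apply: val_inj; rewrite /= -fi -fj.
apply: leq_trans (leq_add hit_le1 IH); rewrite -big_split leq_sum // => i _.
by case: (_ == _); case: has.
Qed.

Section QueryLowerBound.

Variables (R : realFieldType) (gamma : R) (n : nat) (A : seq (R * qtree R n)).
Hypothesis gamma_gt0 : 0 < gamma.
Hypothesis weight_ge0 : forall wt, List.In wt A -> 0 <= wt.1.
Hypothesis weight_sum1 : \sum_(wt <- A) wt.1 = 1.
Hypothesis success_ge : forall adj, simple_adjlist adj -> 2 / 3 <= success_prob gamma A adj.

Definition query_prob (P : pred 'I_n) : R :=
  \sum_(wt <- A) wt.1 * (has P (queried wt.2))%:R.

Definition expected_queries : R :=
  \sum_(wt <- A) wt.1 * (size (queried wt.2))%:R.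

Lemma success_prob_empty_edge_le (u v : 'I_n) (P : pred 'I_n) :
  u != v -> P u -> P v ->
  success_prob gamma A empty_adjlist + success_prob gamma A (edge_adjlist u v)
  <= 1 + query_prob P.
Proof.
move=> neq_uv Pu Pv; rewrite /success_prob /query_prob -big_split /=.
apply: (@le_trans _ _ (\sum_(wt <- A) wt.1 * (1 + (has P (queried wt.2))%:R))); last first.
  rewrite -[X in _ <= X + _]weight_sum1 -big_split ler_sum_In // => wt _.
  by rewrite mulrDr mulr1.
apply: ler_sum_In => wt A_wt; rewrite -mulrDr ler_wpM2l ?weight_ge0 //.
have [_ | /hasPn unqueried] := boolP (has P (queried wt.2)).
  by do 2 case: good_estimate; rewrite /=; lra.
rewrite run_edge_unqueried; first last.
- by apply/negP => /unqueried; rewrite Pv.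
- by apply/negP => /unqueried; rewrite Pu.
have := good_estimate_empty_edge_excl (run empty_adjlist wt.2).1 neq_uv gamma_gt0.
by do 2 case: good_estimate; rewrite /=; lra.
Qed.

Lemma query_prob_pair_ge (u v : 'I_n) (P : pred 'I_n) :
  u != v -> P u -> P v -> 1 / 3 <= query_prob P.
Proof.
move=> neq_uv Pu Pv; have := success_prob_empty_edge_le neq_uv Pu Pv.
have := success_ge (@simple_empty_adjlist n).
have := success_ge (simple_edge_adjlist neq_uv).
lra.
Qed.

Lemma query_prob_block_ge (i : 'I_n./2) : 1 / 3 <= query_prob (fun x => x./2 == i).
Proof.
have lt_v : (2 * i + 1 < n)%N by have := ltn_ord i; lia.
have lt_u : (2 * i < n)%N by lia.
apply: (@query_prob_pair_ge (Ordinal lt_u) (Ordinal lt_v)) => /=.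
- by rewrite -val_eqE /=; lia.
- by apply/eqP; lia.
- by apply/eqP; lia.
Qed.

Lemma expected_queries_ge : (n./2)%:R / 3 <= expected_queries.
Proof.
apply: (@le_trans _ _ (\sum_(i < n./2) query_prob (fun x => x./2 == i))).
  apply: le_trans (ler_sum _ (fun i _ => query_prob_block_ge i)).
  by rewrite sumr_const card_ord -mulr_natr; lra.
rewrite /query_prob exchange_big ler_sum_In // => wt A_wt /=.
rewrite -mulr_sumr -natr_sum ler_wpM2l ?weight_ge0 // ler_nat.
exact: sum_has_fiber_le_size.
Qed.

End QueryLowerBound.

Theorem lemma11p6 (R : realFieldType) (gamma : R) :
  0 < gamma -> gamma <= 1 ->
  exists2 c : R, 0 < c &
  exists n0 : nat, forall n : nat, (n0 <= n)%N ->
  forall A : rand_alg R n, is_distribution A ->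
  (forall adj : adjlist n, simple_adjlist adj -> 2 / 3 <= success_prob gamma A adj) ->
  exists adj : adjlist n, simple_adjlist adj /\
    exists wt : R * qtree R n, List.In wt A /\ 0 < wt.1 /\ c * n%:R <= ((run adj wt.2).2)%:R.
Proof.
move=> gamma_gt0 _; exists (1 / 12); first by rewrite divr_gt0.
exists 3%N => n n_ge3 A [weight_ge0 weight_sum1] success_ge.
apply: contrapT => no_long_run.
have short_runs wt : List.In wt A -> 0 < wt.1 -> (size (queried wt.2))%:R <= 1 / 12 * n%:R :> R.
  move=> A_wt w_gt0; rewrite -run_empty_queries leNgt; apply/negP => long.
  by apply: no_long_run; exists empty_adjlist; split=> //; exists wt; rewrite ltW.
have := weighted_sum_le weight_ge0 short_runs; rewrite weight_sum1 mulr1.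
have := expected_queries_ge gamma_gt0 weight_ge0 weight_sum1 success_ge.
rewrite /expected_queries => /le_trans /[apply].
have -> : (n./2)%:R / 3 <= 1 / 12 * n%:R :> R = ((4 * n./2)%:R <= n%:R :> R).
  by rewrite natrM; apply/idP/idP; lra.
by rewrite ler_nat; lia.
Qed.
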